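(* Let $\alpha,\beta,\gamma,\delta\in\mathbb{R}$ with $\alpha+\delta\neq 0$ and $\alpha\gamma-\beta\delta=0$, and let $G_6$ be the connected, simply connected Lie group whose Lie algebra $\mathfrak{g}_6$ has a basis $\{e_1,e_2,e_3\}$ with $[e_1,e_2]=\alpha e_2+\beta e_3$, $[e_1,e_3]=\gamma e_2+\delta e_3$, $[e_2,e_3]=0$, equipped with the left-invariant Lorentzian metric $g$ for which $\{e_1,e_2,e_3\}$ is pseudo-orthonormal with $e_3$ timelike, and with the product structure $J$. Let $\lambda_0,c\in\mathbb{R}$. Then there exists a derivation $D$ of $\mathfrak{g}_6$ with $\widetilde{\mathrm{Ric}}^1=(s^1\lambda_0+c)\mathrm{Id}+D$ (i.e. $(G_6,g,J)$ is an algebraic Schouten soliton associated to the Kobayashi–Nomizu connection $\nabla^1$) if and only if one of the following holds: (i) $\alpha=\beta=0$, $\delta\neq0$ and $c=0$; (ii) $\alpha\neq0$, $\beta=\gamma=0$, $\alpha+\delta\neq0$ and $c=-\alpha^2+2\alpha^2\lambda_0$.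
   Context: Pseudo-orthonormal means $g(e_1,e_1)=g(e_2,e_2)=1$, $g(e_3,e_3)=-1$, $g(e_i,e_j)=0$ for $i\neq j$; left-invariant tensors are identified with their values on $\mathfrak{g}$. $\nabla$ is the Levi-Civita connection of $g$. The product structure $J$ is the left-invariant endomorphism with $Je_1=e_1$, $Je_2=e_2$, $Je_3=-e_3$. The canonical connection is $\nabla^0_XY=\nabla_XY-\frac12(\nabla_XJ)JY$, and the Kobayashi–Nomizu connection is $\nabla^1_XY=\nabla^0_XY-\frac14[(\nabla_YJ)JX-(\nabla_{JY}J)X]$. For $k=0,1$: $R^k(X,Y)Z=\nabla^k_X\nabla^k_YZ-\nabla^k_Y\nabla^k_XZ-\nabla^k_{[X,Y]}Z$; $\rho^k(X,Y)=-g(R^k(X,e_1)Y,e_1)-g(R^k(X,e_2)Y,e_2)+g(R^k(X,e_3)Y,e_3)$; $\widetilde\rho^k(X,Y)=\frac12(\rho^k(X,Y)+\rho^k(Y,X))$; $\widetilde{\mathrm{Ric}}^k$ is defined by $\widetilde\rho^k(X,Y)=g(\widetilde{\mathrm{Ric}}^k(X),Y)$; and $s^k=\widetilde\rho^k(e_1,e_1)+\widetilde\rho^k(e_2,e_2)-\widetilde\rho^k(e_3,e_3)$. A derivation of $\mathfrak{g}$ is a linear map $D$ with $D[X,Y]=[DX,Y]+[X,DY]$. $(G,g,J)$ is an algebraic Schouten soliton associated to $\nabla^k$ (with real constants $\lambda_0,c$) if $\widetilde{\mathrm{Ric}}^k=(s^k\lambda_0+c)\mathrm{Id}+D$ for some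 derivation $D$. *)

(* Left-invariant objects on G_6 are identified with their
   values on the Lie algebra g_6 = R^3 (column vectors), basis e1,e2,e3 =
   ev i1, ev i2, ev i3. *)
From HB Require Import structures.
From mathcomp Require Import all_boot all_order all_algebra.
From mathcomp Require Import reals.
Set Implicit Arguments.
Unset Strict Implicit.
Unset Printing Implicit Defensive.
Import Order.TTheory GRing.Theory Num.Theory.
Local Open Scope ring_scope.

Section G6.
Variable R : realType.
Variables (al be ga de : R).

Definition vec := 'cV[R]_3.
Definition i1 : 'I_3 := inord 0.
Definition i2 : 'I_3 := inord 1.
Definition i3 : 'I_3 := inord 2.
Definition ev (i : 'I_3) : vec := delta_mx i 0.
Definition co (X : vec) (i : 'I_3) : R := X i 0.

(* bilinear, antisymmetric extension of
   [e1,e2] = al e2 + be e3, [e1,e3] = ga e2 + de e3, [e2,e3] = 0 *)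
Definition br (X Y : vec) : vec :=
  (co X i1 * co Y i2 - co X i2 * co Y i1) *: (al *: ev i2 + be *: ev i3)
  + (co X i1 * co Y i3 - co X i3 * co Y i1) *: (ga *: ev i2 + de *: ev i3)
  + (co X i2 * co Y i3 - co X i3 * co Y i2) *: (0 : vec).

Definition eps (k : 'I_3) : R := if k == i3 then -1 else 1.
Definition g (X Y : vec) : R := \sum_k eps k * co X k * co Y k.

Definition J (X : vec) : vec := co X i1 *: ev i1 + co X i2 *: ev i2 - co X i3 *: ev i3.

(* Levi-Civita connection on left-invariant fields (Koszul formula) *)
Definition koszul (X Y Z : vec) : R :=
  (g (br X Y) Z - g (br Y Z) X + g (br Z X) Y) / 2.
Definition nabla (X Y : vec) : vec := \sum_k (eps k * koszul X Y (ev k)) *: ev k.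

Definition nablaJ (X Y : vec) : vec := nabla X (J Y) - J (nabla X Y).

Definition nabla0 (X Y : vec) : vec := nabla X Y - (1/2) *: nablaJ X (J Y).
Definition nabla1 (X Y : vec) : vec :=
  nabla0 X Y - (1/4) *: (nablaJ Y (J X) - nablaJ (J Y) X).

Definition curv (N : vec -> vec -> vec) (X Y Z : vec) : vec :=
  N X (N Y Z) - N Y (N X Z) - N (br X Y) Z.
Definition rho N (X Y : vec) : R := \sum_k - (eps k * g (curv N X (ev k) Y) (ev k)).
Definition rhot N (X Y : vec) : R := (rho N X Y + rho N Y X) / 2.
(* the unique endomorphism with rhot N X Y = g (Ric N X) Y *)
Definition Ric N (X : vec) : vec := \sum_k (eps k * rhot N X (ev k)) *: ev k.
Definition scal N : R := \sum_k eps k * rhot N (ev k) (ev k).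

Definition derivation (D : 'M[R]_3) : Prop :=
  forall X Y : vec, D *m br X Y = br (D *m X) Y + br X (D *m Y).

Definition algebraic_schouten_soliton N (lam c : R) : Prop :=
  exists D : 'M[R]_3, derivation D /\
    forall X : vec, Ric N X = (scal N * lam + c) *: X + D *m X.

End G6.

(* For the Kobayashi--Nomizu connection only three coefficients survive:
   nabla1_X Y = (al x2 y2, - al x2 y1 - ga x3 y1, de x1 y3) in the frame
   (e1, e2, e3).  Hence the symmetrised Ricci operator is diagonal,
   diag (-(al^2 + be ga), -al^2, 0), and s1 = -2 al^2 - be ga.  A soliton
   derivation is then forced to be D = Ric - k Id with k = s1 lam + c, and a
   diagonal map diag (d1, d2, d3) is a derivation of g_6 exactly when
   al d1 = de d1 = be (d1 + d2 - d3) = ga (d1 + d3 - d2) = 0.  As al + de <> 0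
   this gives d1 = 0, i.e. k = -(al^2 + be ga), and be al^2 = ga al^2 = 0;
   the relation al ga = be de separates the cases al = 0 and al <> 0. *)
From HB Require Import structures.
From mathcomp Require Import all_boot all_order all_algebra.
From mathcomp Require Import reals ring lra.
Import Order.TTheory GRing.Theory Num.Theory.
Set Implicit Arguments.
Unset Strict Implicit.
Unset Printing Implicit Defensive.
Local Open Scope ring_scope.

Lemma eq_i1i2 : (i1 == i2) = false.
Proof. by apply/eqP => /(congr1 val); rewrite /= !inordK. Qed.
Lemma eq_i1i3 : (i1 == i3) = false.
Proof. by apply/eqP => /(congr1 val); rewrite /= !inordK. Qed.
Lemma eq_i2i3 : (i2 == i3) = false.
Proof. by apply/eqP => /(congr1 val); rewrite /= !inordK. Qed.
Lemma eq_i2i1 : (i2 == i1) = false. Proof. by rewrite eq_sym eq_i1i2. Qed.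
Lemma eq_i3i1 : (i3 == i1) = false. Proof. by rewrite eq_sym eq_i1i3. Qed.
Lemma eq_i3i2 : (i3 == i2) = false. Proof. by rewrite eq_sym eq_i2i3. Qed.

Lemma ord3P (i : 'I_3) : [\/ i = i1, i = i2 | i = i3].
Proof.
case: i => [[|[|[|n]]] lt_n3] //.
- by apply: Or31; apply: val_inj; rewrite /= inordK.
- by apply: Or32; apply: val_inj; rewrite /= inordK.
- by apply: Or33; apply: val_inj; rewrite /= inordK.
Qed.

Lemma sum3 (T : nmodType) (F : 'I_3 -> T) : \sum_(k < 3) F k = F i1 + F i2 + F i3.
Proof.
rewrite !big_ord_recr big_ord0 /= add0r.
by congr (F _ + F _ + F _); apply/val_inj; rewrite /= inordK.
Qed.

Section Coordinates.
Variable R : realType.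
Implicit Types (X Y : vec R) (M : 'M[R]_3).

Definition vec3 (u v w : R) : vec R := u *: ev R i1 + v *: ev R i2 + w *: ev R i3.

Definition diag3 (d1 d2 d3 : R) : 'M[R]_3 :=
  \matrix_(i, j) ((i == j)%:R * co (vec3 d1 d2 d3) i).

Definition wedge X Y i j : R := co X i * co Y j - co X j * co Y i.

Lemma coD X Y i : co (X + Y) i = co X i + co Y i. Proof. by rewrite /co mxE. Qed.
Lemma coN X i : co (- X) i = - co X i. Proof. by rewrite /co mxE. Qed.
Lemma coZ a X i : co (a *: X) i = a * co X i. Proof. by rewrite /co mxE. Qed.
Lemma co0 i : co (0 : vec R) i = 0. Proof. by rewrite /co mxE. Qed.
Lemma co_ev i j : co (ev R i) j = (j == i)%:R. Proof. by rewrite /co /ev mxE andbT. Qed.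
Lemma co_mulmx M X i :
  co (M *m X) i = M i i1 * co X i1 + M i i2 * co X i2 + M i i3 * co X i3.
Proof. by rewrite /co mxE sum3. Qed.

Lemma eps1 : eps R i1 = 1. Proof. by rewrite /eps eq_i1i3. Qed.
Lemma eps2 : eps R i2 = 1. Proof. by rewrite /eps eq_i2i3. Qed.
Lemma eps3 : eps R i3 = -1. Proof. by rewrite /eps eqxx. Qed.

Definition coE := (coD, coN, coZ, co0, co_ev, co_mulmx, eqxx,
  eq_i1i2, eq_i1i3, eq_i2i1, eq_i2i3, eq_i3i1, eq_i3i2, eps1, eps2, eps3, mxE).

Lemma co_vec3_1 u v w : co (vec3 u v w) i1 = u. Proof. rewrite /vec3 !coE /=; ring. Qed.
Lemma co_vec3_2 u v w : co (vec3 u v w) i2 = v. Proof. rewrite /vec3 !coE /=; ring. Qed.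
Lemma co_vec3_3 u v w : co (vec3 u v w) i3 = w. Proof. rewrite /vec3 !coE /=; ring. Qed.

Definition co_vec3E := (co_vec3_1, co_vec3_2, co_vec3_3).

Lemma vec3_eq0P u v w : vec3 u v w = 0 <-> [/\ u = 0, v = 0 & w = 0].
Proof.
split=> [eq0 | [-> -> ->]]; last by rewrite /vec3 !scale0r !addr0.
by split; [rewrite -(co_vec3_1 u v w) | rewrite -(co_vec3_2 u v w)
  | rewrite -(co_vec3_3 u v w)]; rewrite eq0 co0.
Qed.

Lemma vecP X Y :
  co X i1 = co Y i1 -> co X i2 = co Y i2 -> co X i3 = co Y i3 -> X = Y.
Proof.
move=> eq1 eq2 eq3; apply/matrixP => i j; rewrite (ord1 j).
by case: (ord3P i) => ->.
Qed.

Lemma mul_diag3 d1 d2 d3 X :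
  diag3 d1 d2 d3 *m X = vec3 (d1 * co X i1) (d2 * co X i2) (d3 * co X i3).
Proof.
by apply: vecP; rewrite !(coE, co_vec3E) /=; ring.
Qed.

Lemma gE X Y : g X Y = co X i1 * co Y i1 + co X i2 * co Y i2 - co X i3 * co Y i3.
Proof. rewrite /g sum3 eps1 eps2 eps3; ring. Qed.

Lemma mulmx_ext M M' : (forall X, M *m X = M' *m X) -> M = M'.
Proof.
move=> eqMM'; apply/matrixP => i j.
by have := congr1 (fun v : vec R => v i 0) (eqMM' (delta_mx j 0)); rewrite -!colE !mxE.
Qed.

End Coordinates.

Section Derivations.
Variables (R : realType) (al be ga de : R).
Implicit Types X Y : vec R.

Local Notation br := (br al be ga de).

Lemma brE X Y : br X Y =
  vec3 0 (al * wedge X Y i1 i2 + ga * wedge X Y i1 i3)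
         (be * wedge X Y i1 i2 + de * wedge X Y i1 i3).
Proof. by apply: vecP; rewrite /br /wedge !(coE, co_vec3E) /=; ring. Qed.

Lemma diag3_derivation_defect d1 d2 d3 X Y :
  let D := diag3 d1 d2 d3 in
  D *m br X Y - (br (D *m X) Y + br X (D *m Y)) =
  vec3 0
    (- (al * d1 * wedge X Y i1 i2 + ga * (d1 + d3 - d2) * wedge X Y i1 i3))
    (- (be * (d1 + d2 - d3) * wedge X Y i1 i2 + de * d1 * wedge X Y i1 i3)).
Proof. by apply: vecP; rewrite !mul_diag3 !brE /wedge !(coE, co_vec3E) /=; ring. Qed.

Lemma derivation_diag3P d1 d2 d3 :
  derivation al be ga de (diag3 d1 d2 d3) <->
  [/\ al * d1 = 0, de * d1 = 0, be * (d1 + d2 - d3) = 0 & ga * (d1 + d3 - d2) = 0].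
Proof.
rewrite /derivation; set D := diag3 d1 d2 d3.
split=> [der | [h1 h2 h3 h4] X Y].
  have defect0 X Y : D *m br X Y - (br (D *m X) Y + br X (D *m Y)) = 0.
    by rewrite der subrr.
  move: (defect0 (ev R i1) (ev R i2)) (defect0 (ev R i1) (ev R i3)).
  rewrite !diag3_derivation_defect /wedge !coE /=.
  by move=> /vec3_eq0P[_ e12 e12'] /vec3_eq0P[_ e13 e13']; split; lra.
apply/eqP; rewrite -subr_eq0 diag3_derivation_defect h1 h2 h3 h4.
by apply/eqP/vec3_eq0P; split; ring.
Qed.

End Derivations.

Lemma schouten_soliton_diag3P (R : realType) (al be ga de : R)
    (N : vec R -> vec R -> vec R) (r1 r2 r3 lam c : R) :
  (forall X, Ric al be ga de N X = diag3 r1 r2 r3 *m X) ->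
  let k := scal al be ga de N * lam + c in
  algebraic_schouten_soliton al be ga de N lam c <->
  derivation al be ga de (diag3 (r1 - k) (r2 - k) (r3 - k)).
Proof.
move=> RicE k.
have shiftE X : diag3 (r1 - k) (r2 - k) (r3 - k) *m X = Ric al be ga de N X - k *: X.
  by rewrite RicE; apply: vecP; rewrite !mul_diag3 !(coE, co_vec3E); ring.
split=> [[D [derD RicD]] | der].
  suff -> : diag3 (r1 - k) (r2 - k) (r3 - k) = D by [].
  by apply: mulmx_ext => X; rewrite shiftE RicD addrAC subrr add0r.
by exists (diag3 (r1 - k) (r2 - k) (r3 - k)); split=> // X; rewrite shiftE addrC subrK.
Qed.

Section KobayashiNomizu.
Variables (R : realType) (al be ga de : R).
Implicit Types X Y : vec R.

Local Notation nabla1 := (nabla1 al be ga de).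

Lemma JE X : J X = vec3 (co X i1) (co X i2) (- co X i3).
Proof. by apply: vecP; rewrite /J !(coE, co_vec3E) /=; ring. Qed.

Lemma nablaE X Y : nabla al be ga de X Y =
  vec3 (al * co X i2 * co Y i2 + (ga - be) / 2 * (co X i2 * co Y i3 + co X i3 * co Y i2)
          - de * co X i3 * co Y i3)
       (- (al * co X i2 * co Y i1) + (ga + be) / 2 * (co X i1 * co Y i3)
          + (be - ga) / 2 * (co X i3 * co Y i1))
       ((be + ga) / 2 * (co X i1 * co Y i2) + (ga - be) / 2 * (co X i2 * co Y i1)
          - de * co X i3 * co Y i1).
Proof.
by apply: vecP; rewrite /nabla /koszul !sum3 !gE !brE /wedge !(coE, co_vec3E) /=; field.
Qed.

Lemma nabla1E X Y : nabla1 X Y =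
  vec3 (al * co X i2 * co Y i2) (- (al * co X i2 * co Y i1) - ga * co X i3 * co Y i1)
       (de * co X i1 * co Y i3).
Proof.
by apply: vecP; rewrite /nabla1 /nabla0 /nablaJ !nablaE !JE /wedge !(coE, co_vec3E) /=; field.
Qed.

Lemma curv_nabla1E X Y Z : curv al be ga de nabla1 X Y Z =
  vec3 (- al * ga * wedge X Y i2 i3 * co Z i1
        - (al ^+ 2 * wedge X Y i1 i2 + al * ga * wedge X Y i1 i3) * co Z i2)
       (al * ga * wedge X Y i2 i3 * co Z i2
        + ((al ^+ 2 + be * ga) * wedge X Y i1 i2 + ga * (al + de) * wedge X Y i1 i3) * co Z i1)
       0.
Proof. by apply: vecP; rewrite /curv !nabla1E !brE /wedge !(coE, co_vec3E) /=; ring. Qed.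

Lemma rho_nabla1E X Y : rho al be ga de nabla1 X Y =
  - (al ^+ 2 + be * ga) * co X i1 * co Y i1 - al ^+ 2 * co X i2 * co Y i2.
Proof. by rewrite /rho sum3 !curv_nabla1E !gE /wedge !(coE, co_vec3E) /=; ring. Qed.

Lemma rhot_nabla1E X Y : rhot al be ga de nabla1 X Y =
  - (al ^+ 2 + be * ga) * co X i1 * co Y i1 - al ^+ 2 * co X i2 * co Y i2.
Proof. by rewrite /rhot !rho_nabla1E; field. Qed.

Lemma Ric_nabla1E X :
  Ric al be ga de nabla1 X = diag3 (- (al ^+ 2 + be * ga)) (- al ^+ 2) 0 *m X.
Proof.
by rewrite mul_diag3; apply: vecP; rewrite /Ric sum3 !rhot_nabla1E !(coE, co_vec3E) /=; ring.
Qed.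

Lemma scal_nabla1E : scal al be ga de nabla1 = - 2 * al ^+ 2 - be * ga.
Proof. by rewrite /scal sum3 !rhot_nabla1E !(coE, co_vec3E) /=; ring. Qed.

Lemma derivation_Ric_nabla1_shiftP k :
  al + de != 0 -> al * ga - be * de = 0 ->
  derivation al be ga de
    (diag3 (- (al ^+ 2 + be * ga) - k) (- al ^+ 2 - k) (0 - k)) <->
  (al = 0 /\ be = 0 /\ de != 0 /\ k = 0) \/
  (al != 0 /\ be = 0 /\ ga = 0 /\ k = - al ^+ 2).
Proof.
move=> ad_neq0 ag_bd; rewrite derivation_diag3P; split; last first.
  by case=> [[-> [-> [_ ->]]] | [_ [-> [-> ->]]]]; split; ring.
case=> h1 h2 h3 h4.
have kE : k = - (al ^+ 2 + be * ga).
  have /eqP : (al + de) * (- (al ^+ 2 + be * ga) - k) = 0 by rewrite mulrDl h1 h2 addr0.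
  by rewrite mulf_eq0 (negbTE ad_neq0) /= subr_eq0 => /eqP.
have be_al : be * al ^+ 2 = 0 by move: h3; rewrite kE; lra.
have ga_al : ga * al ^+ 2 = 0 by move: h4; rewrite kE; lra.
have [al0 | al_neq0] := eqVneq al 0.
  have de_neq0 : de != 0 by rewrite al0 add0r in ad_neq0.
  have be0 : be = 0.
    by move/eqP: ag_bd; rewrite al0 mul0r sub0r oppr_eq0 mulf_eq0 (negbTE de_neq0) orbF => /eqP.
  by left; rewrite kE al0 be0; do !split=> //; ring.
have al2_neq0 : al ^+ 2 != 0 by rewrite expf_neq0.
have be0 : be = 0 by move/eqP: be_al; rewrite mulf_eq0 (negbTE al2_neq0) orbF => /eqP.
have ga0 : ga = 0 by move/eqP: ga_al; rewrite mulf_eq0 (negbTE al2_neq0) orbF => /eqP.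
by right; rewrite kE be0 ga0; do !split=> //; ring.
Qed.

End KobayashiNomizu.

Theorem theorem4p13 (R : realType) (al be ga de lam c : R) :
  al + de != 0 -> al * ga - be * de = 0 ->
  (algebraic_schouten_soliton al be ga de (nabla1 al be ga de) lam c <->
   (al = 0 /\ be = 0 /\ de != 0 /\ c = 0) \/
   (al != 0 /\ be = 0 /\ ga = 0 /\ al + de != 0 /\
    c = - al ^+ 2 + 2 * al ^+ 2 * lam)).
Proof.
move=> ad_neq0 ag_bd.
rewrite (schouten_soliton_diag3P _ _ (@Ric_nabla1E R al be ga de)) /= scal_nabla1E.
rewrite derivation_Ric_nabla1_shiftP //.
split=> [[[al0 [be0 [de_neq0 k0]]] | [al_neq0 [be0 [ga0 k_al]]]] |
         [[al0 [be0 [de_neq0 c0]]] | [al_neq0 [be0 [ga0 [_ c_al]]]]]].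
- by left; move: k0; rewrite al0 be0; do !split=> //; lra.
- by right; move: k_al; rewrite be0 ga0; do !split=> //; lra.
- by left; rewrite al0 be0 c0; do !split=> //; ring.
- by right; rewrite be0 ga0 c_al; do !split=> //; ring.
Qed.
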